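(* Let $w$ be an nTL-monomial for $P_n$ with decreasing runs $R_1,\dots,R_k$ (in order of appearance) and peaks $p_1,\dots,p_k$. Then $p_1<p_2<\cdots<p_k$.
   Context: Fix $n\ge 0$. The nil-Temperley-Lieb algebra $A_n$ of the path graph $P_n$ is the unital associative algebra generated by $x_1,\dots,x_n$ subject to the relations $x_i^2=0$; $x_ix_j=x_jx_i$ if $|i-j|>1$; $x_ix_{i+1}x_i=0$ and $x_{i+1}x_ix_{i+1}=0$ for $1\le i<n$. A word is a finite product $x_{i_1}\cdots x_{i_m}$ of generators. Two words are equivalent if one can be obtained from the other by repeatedly swapping adjacent letters $x_ix_j\to x_jx_i$ with $|i-j|>1$. A word is reducible if it equals $0$ in $A_n$. Words of the same length are compared lexicographically by index sequences. An nTL-monomial is a word that is not reducible and lexicographically smallest among all words equivalent to it. A decreasing run is a maximal block of consecutive letters with strictly decreasing indices; the index of its first letter is its peak, and the index of its last letter is its valley. *)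

From mathcomp Require Import all_boot.
From Stdlib Require Import Relation_Operators.
Set Implicit Arguments. Unset Strict Implicit. Unset Printing Implicit Defensive.

(* A word x_{i_1} ... x_{i_m} is represented by its index sequence [:: i_1; ...; i_m]. *)
Definition word := seq nat.

Definition word_on (n : nat) (w : word) : bool := all (fun i => (0 < i <= n)%N) w.

Inductive comm_step : word -> word -> Prop :=
| CommStep u v i j : (i.+1 < j)%N || (j.+1 < i)%N ->
    comm_step (u ++ [:: i; j] ++ v) (u ++ [:: j; i] ++ v).

Definition word_equiv : word -> word -> Prop := clos_refl_sym_trans word comm_step.

(* The defining presentation of A_n, read as a presentation of a monoid with
   zero: elements are words or Zero (None).  One-step rewriting by a defining
   relation applied inside a context. *)
Inductive rel_step : option word -> option word -> Prop :=
| RComm u v i j : (i.+1 < j)%N || (j.+1 < i)%N ->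
    rel_step (Some (u ++ [:: i; j] ++ v)) (Some (u ++ [:: j; i] ++ v))
| RSquare u v i : rel_step (Some (u ++ [:: i; i] ++ v)) None
| RBraid1 u v i : rel_step (Some (u ++ [:: i; i.+1; i] ++ v)) None
| RBraid2 u v i : rel_step (Some (u ++ [:: i.+1; i; i.+1] ++ v)) None.

Definition reducible (w : word) : Prop :=
  clos_refl_sym_trans (option word) rel_step (Some w) None.

Fixpoint lexle (s t : word) : bool :=
  match s, t with
  | [::], _ => true
  | _ :: _, [::] => false
  | a :: s', b :: t' => (a < b)%N || ((a == b) && lexle s' t')
  end.

Definition nTL_monomial (n : nat) (w : word) : Prop :=
  word_on n w /\ ~ reducible w /\
  (forall w', word_equiv w w' -> lexle w w').

(* Decomposition of a word into its decreasing runs (maximal blocks of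
   consecutive letters with strictly decreasing indices), in order. *)
Fixpoint runs (w : word) : seq word :=
  match w with
  | [::] => [::]
  | x :: s =>
      match runs s with
      | (y :: r) :: rs => if (y < x)%N then (x :: y :: r) :: rs
                          else [:: x] :: (y :: r) :: rs
      | rs => [:: x] :: rs
      end
  end.

Definition peaks (w : word) : seq nat := map (head 0%N) (runs w).

From mathcomp Require Import all_boot.
From Stdlib Require Import Relation_Operators.
Set Implicit Arguments. Unset Strict Implicit. Unset Printing Implicit Defensive.

(* Lexicographic minimality forbids adjacent letters x_a x_b with a > b + 1,
   since swapping them gives a smaller equivalent word; hence every decreasing
   run reads p, p-1, ..., v.  Irreducibility forbids every factor
   x_q x_(q-1) ... x_v x_q: the letters below q - 1 commute past the last x_q,
   leaving x_q x_(q-1) x_q (or x_q x_q when the factor has length 2).  The peak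
   q following the run p, ..., v satisfies q >= v, as the run ends there; so
   q <= p would make q, q-1, ..., v, q such a factor. *)

Local Notation rel_equiv := (clos_refl_sym_trans (option word) rel_step).

Definition unit_desc (a b : nat) : bool := a == b.+1.

Definition unit_descents (w : word) : Prop :=
  forall x y, infix [:: x; y] w -> y < x -> x = y.+1.

Definition dip_free (w : word) : Prop :=
  forall p r, path unit_desc p r -> ~~ infix (p :: r ++ [:: p]) w.

Lemma runs_flatten s : flatten (runs s) = s.
Proof.
elim: s => [|x s IH] //=; move: IH.
by case: (runs s) => [|[|y r] rs] /= <- //; case: ifP.
Qed.

Lemma nil_notin_runs s : [::] \notin runs s.
Proof.
elim: s => [|x s IH] //=; move: IH.
by case: (runs s) => [|[|y r] rs] //; case: ifP.
Qed.

Lemma unit_descents_cons x s : unit_descents (x :: s) -> unit_descents s.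
Proof. by move=> Hw a b /infix_trans/(_ (infix_cons s x)); apply: Hw. Qed.

Lemma dip_free_cons x s : dip_free (x :: s) -> dip_free s.
Proof.
move=> Hw p r Hr; apply: contra (Hw p r Hr) => /infix_trans; apply.
exact: infix_cons.
Qed.

Lemma unit_desc_path_lt y r : path unit_desc y r -> all (fun z => z < y) r.
Proof.
move=> Hr; apply: (order_path_min (leT := gtn)); first exact: rev_trans ltn_trans.
by apply: sub_path Hr => a b /eqP ->; exact: ltnSn.
Qed.

Lemma dip_free_peaks_sorted w : unit_descents w -> dip_free w ->
  sorted unit_desc (head [::] (runs w)) /\ sorted ltn (peaks w).
Proof.
elim: w => [|x s IH] // Hdesc Hdip.
have [] := IH (unit_descents_cons Hdesc) (dip_free_cons Hdip).
have := runs_flatten s; have := nil_notin_runs s; rewrite /peaks /=.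
case: (runs s) => [|[|y r] rs] //= Hnil Hs Hrun Hpeaks.
case: ltnP => [lt_yx | le_xy] /=.
- have Exy : x = y.+1 by apply: Hdesc; rewrite // -Hs; exact: prefix_infix.
  have Hxy : unit_desc x y by apply/eqP.
  split; first by rewrite Hxy.
  move: Hnil Hs Hpeaks; case: rs => [|[|q r2] rs] //= _ Hs /andP[lt_yq ->].
  rewrite andbT ltn_neqAle Exy lt_yq andbT; apply/eqP => Eq.
  have /negP := Hdip x (y :: r) (introT andP (conj Hxy Hrun)); apply.
  apply/infixP; exists [::], (r2 ++ flatten rs).
  by rewrite -Hs Exy -Eq /= -catA.
- split=> //; rewrite Hpeaks andbT ltn_neqAle le_xy andbT.
  apply/eqP => Exy; have /negP := Hdip x [::] isT; apply.
  by rewrite -Hs -Exy; apply: prefix_infix.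
Qed.

Lemma lexle_cat u a b : lexle (u ++ a) (u ++ b) = lexle a b.
Proof. by elim: u => [|x u IH] //=; rewrite ltnn eqxx IH. Qed.

Lemma lexmin_unit_descents w :
  (forall w', word_equiv w w' -> lexle w w') -> unit_descents w.
Proof.
move=> Hmin x y /infixP[u [v Ew]] lt_yx; apply/eqP.
rewrite eqn_leq lt_yx andbT leqNgt; apply/negP => lt_y1x.
have Hswap : word_equiv w (u ++ [:: y; x] ++ v).
  by rewrite Ew; apply: rst_step; apply: CommStep; rewrite lt_y1x orbT.
have := Hmin _ Hswap; rewrite Ew lexle_cat /=.
by rewrite ltnNge ltnW //= gtn_eqF.
Qed.

Lemma rel_equiv_shift_left u d b v : all (fun z => z.+1 < b) d ->
  rel_equiv (Some (u ++ d ++ b :: v)) (Some (u ++ b :: d ++ v)).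
Proof.
elim: d u => [|z d IH] u /=; first by move=> _; apply: rst_refl.
move=> /andP[lt_zb Hd].
apply: (rst_trans _ _ _ (Some (u ++ z :: b :: d ++ v))).
  by have := IH (rcons u z) Hd; rewrite -cats1 -!catA.
by apply: rst_step; apply: (RComm u (d ++ v)); rewrite lt_zb.
Qed.

Lemma irreducible_dip_free w : ~ reducible w -> dip_free w.
Proof.
move=> Hirr p [|y r] Hr; apply/negP => /infixP[u [v Ew]]; apply: Hirr; rewrite Ew.
  exact/rst_step/RSquare.
case/andP: Hr => /eqP Ep /unit_desc_path_lt Hr; subst p.
have lt_r : all (fun z => z.+1 < y.+1) r := Hr.
set u' := rcons (rcons u y.+1) y.
have -> : u ++ (y.+1 :: (y :: r) ++ [:: y.+1]) ++ v = u' ++ r ++ y.+1 :: v.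
  by rewrite /u' -!cats1 -!catA /= -catA.
apply: rst_trans (rel_equiv_shift_left u' v lt_r) _.
have -> : u' ++ y.+1 :: r ++ v = u ++ [:: y.+1; y; y.+1] ++ r ++ v.
  by rewrite /u' -!cats1 -!catA.
exact/rst_step/RBraid2.
Qed.

Theorem lemma3 (n : nat) (w : word) :
  nTL_monomial n w ->
  forall i j, (i < j < size (peaks w))%N ->
    (nth 0 (peaks w) i < nth 0 (peaks w) j)%N.
Proof.
move=> [_ [Hirr Hmin]] i j /andP[lt_ij lt_j].
have [_ Hsorted] := dip_free_peaks_sorted (lexmin_unit_descents Hmin)
  (irreducible_dip_free Hirr).
by apply: (sorted_ltn_nth ltn_trans 0 Hsorted); rewrite // inE (ltn_trans lt_ij).
Qed.
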